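(* Let $X\subset\mathbb{R}^d$ be a finite point cloud in general position and $1\le k<d$. Consider persistent homology of the Delaunay--Rips filtration computed with respect to a simplexwise refinement compatible with $\prec$. Then every $k$-simplex that gives birth to a $k$-dimensional persistence pair $(\sigma,\tau)$ of positive persistence (i.e., $\delta(\tau)>\delta(\sigma)$) belongs to $\mathrm{USC}^k\setminus\mathrm{MSA}^k$.
   Context: General position: no $d+1$ points on a common affine hyperplane, no $d+2$ on a common $(d-1)$-sphere; $\mathsf{DEL}$ is the Delaunay complex of $X$, $\mathsf{DEL}^k$ its $k$-simplices, $\delta$ the Euclidean diameter. Delaunay--Rips filtration: $\mathcal{DR}_r=\{\sigma\in\mathsf{DEL}:\delta(\sigma)\le2r\}$. Total orders $\prec$ on $\mathsf{DEL}^k$: for edges, $\sigma\prec\sigma'$ iff $\delta(\sigma)<\delta(\sigma')$ or ($\delta(\sigma)=\delta(\sigma')$ and $\sigma$ lexicographically precedes $\sigma'$); for $(k+1)$-simplices, $\sigma\prec\sigma'$ iff $\max\partial\sigma\prec\max\partial\sigma'$ or ($\max\partial\sigma=\max\partial\sigma'$ and $\sigma$ lexicographically precedes $\sigma'$), $\partial$ denoting the set of facets. A simplexwise refinement compatible with $\prec$ is a total order on all simplices of $\mathsf{DEL}$ in which every simplex comes after its faces, simplices of smaller diameter come before those of larger diameter, and simplices of the same dimension appear in $\prec$ order; persistence pairs $(\sigma,\tau)$ (creator $\sigma$, destroyer $\tau$) are those of this simplexwise filtration, with persistence $\delta(\tau)-\delta(\sigma)$. A set $S\subseteq\mathsf{DEL}^k$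 is a $k$-spanning acycle if $L=\mathsf{DEL}^{(k-1)}\cup S$ satisfies $\tilde\beta_k(L)=\tilde\beta_{k-1}(L)=0$; $\mathrm{MSA}^k$ is the minimum $k$-spanning acycle w.r.t. $\prec$ (unique minimizer of $\sum_{\sigma\in S}w(\sigma)$ for any $w$ strictly increasing along $\prec$). $\mathrm{USC}^k=\{\sigma\in\mathsf{DEL}^k:\sigma\prec\max\partial\tau\text{ for every }(k+1)\text{-simplex }\tau\in\mathsf{DEL}\text{ with }\sigma\subset\tau\}$. *)

From HB Require Import structures.
From mathcomp Require Import all_boot all_order all_algebra.
From mathcomp Require Import boolp reals.
Set Implicit Arguments. Unset Strict Implicit. Unset Printing Implicit Defensive.
Import Order.TTheory GRing.Theory Num.Theory.
Local Open Scope ring_scope.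

Fixpoint lexlt (s t : seq nat) : bool :=
  match s, t with
  | [::], [::] => false
  | [::], _ :: _ => true
  | _ :: _, [::] => false
  | x :: s', y :: t' => (x < y)%N || ((x == y) && lexlt s' t')
  end.

Definition labels n (s : {set 'I_n}) : seq nat := sort leq [seq val i | i <- enum s].

Definition lexprec n (s t : {set 'I_n}) : bool := lexlt (labels s) (labels t).

Definition facet n (f t : {set 'I_n}) : bool := (f \subset t) && (#|t| == #|f|.+1).

Definition maxfacet_with n (r : rel {set 'I_n}) (t : {set 'I_n}) : {set 'I_n} :=
  odflt t [pick f | facet f t && [forall g, (facet g t && (g != f)) ==> r g f]].

(* incidence coefficient [sigma : tau] of the oriented simplicial boundary,
   vertices oriented by increasing label *)
Definition bdcoef (F : nzRingType) n (sigma tau : {set 'I_n}) : F :=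
  if facet sigma tau
  then \sum_(v in tau :\: sigma) (-1) ^+ #|[set u in tau | (u < v)%N]|
  else 0.

Section Geometry.
Variables (R : realType) (d n : nat) (P : 'I_n -> 'rV[R]_d).

Definition sqdist (x y : 'rV[R]_d) : R := \sum_(j < d) (x 0 j - y 0 j) ^+ 2.
Definition edist (x y : 'rV[R]_d) : R := Num.sqrt (sqdist x y).

Definition diam (s : {set 'I_n}) : R :=
  \big[Num.max/0]_(i in s) \big[Num.max/0]_(j in s) edist (P i) (P j).

Definition general_position : Prop :=
  (forall S : {set 'I_n}, #|S| = d.+1 ->
     ~ exists (a : 'rV[R]_d) (b : R),
         a != 0 /\ forall i, i \in S -> \sum_(j < d) a 0 j * P i 0 j = b) /\
  (forall S : {set 'I_n}, #|S| = d.+2 ->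
     ~ exists (c : 'rV[R]_d) (r : R), forall i, i \in S -> sqdist (P i) c = r).

(* Delaunay simplex: nonempty, with an empty circumsphere
   (equivalently, the Voronoi cells of its vertices have a common point) *)
Definition is_delaunay (s : {set 'I_n}) : Prop :=
  s != set0 /\
  exists (c : 'rV[R]_d) (r : R),
    (forall i, i \in s -> sqdist (P i) c = r) /\ (forall j, r <= sqdist (P j) c).

Definition DEL : {set {set 'I_n}} := [set s | `[< is_delaunay s >]].
Definition DELk (k : nat) : {set {set 'I_n}} := [set s in DEL | #|s| == k.+1].

(* the order prec on edges, extended recursively to higher dimensions;
   prec_aux m compares (m+1)-simplices *)
Fixpoint prec_aux (m : nat) : rel {set 'I_n} :=
  match m with
  | 0 => fun s t => (diam s < diam t) || ((diam s == diam t) && lexprec s t)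
  | m'.+1 => fun s t =>
      let ms := maxfacet_with (prec_aux m') s in
      let mt := maxfacet_with (prec_aux m') t in
      prec_aux m' ms mt || ((ms == mt) && lexprec s t)
  end.

Definition prec (k : nat) : rel {set 'I_n} := prec_aux k.-1.
Definition maxbd (k : nat) (t : {set 'I_n}) : {set 'I_n} := maxfacet_with (prec k) t.

Definition USC (k : nat) (s : {set 'I_n}) : Prop :=
  s \in DELk k /\
  forall t, t \in DELk k.+1 -> s \subset t -> prec k s (maxbd k t).

(* simplexwise refinement of the Delaunay--Rips filtration compatible with prec,
   given as the list of all Delaunay simplices in filtration order *)
Definition simplexwise_refinement (s : seq {set 'I_n}) : Prop :=
  [/\ uniq s,
      (forall x, x \in s = (x \in DEL)),
      (forall x y, x \in s -> y \in s -> x \proper y -> (index x s < index y s)%N),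
      (forall x y, x \in s -> y \in s -> diam x < diam y -> (index x s < index y s)%N)
    & (forall k x y, (1 <= k)%N -> x \in s -> y \in s -> #|x| = k.+1 -> #|y| = k.+1 ->
         prec k x y -> (index x s < index y s)%N)].

Section Homology.
Variable F : fieldType.

Definition allsets : seq {set 'I_n} := enum [set: {set 'I_n}].

(* matrix of the (augmented, via the empty simplex) boundary map
   C_k(L) -> C_{k-1}(L), L given as a set of simplices *)
Definition chainbd (L : {set {set 'I_n}}) (k : nat) : 'M[F]_(size allsets) :=
  \matrix_(a < size allsets, b < size allsets)
    let x := nth set0 allsets a in let y := nth set0 allsets b in
    if (x \in L) && (y \in L) && (#|y| == k.+1) then bdcoef F x y else 0.

(* reduced Betti number (over F) of the complex L (not containing the empty set) *)
Definition reduced_betti (L : {set {set 'I_n}}) (k : nat) : int :=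
  let L' := (set0 : {set 'I_n}) |: L in
  (#|[set x in L | #|x| == k.+1]|)%:Z - (\rank (chainbd L' k))%:Z
    - (\rank (chainbd L' k.+1))%:Z.

Definition spanning_acycle (k : nat) (S : {set {set 'I_n}}) : Prop :=
  S \subset DELk k /\
  let L := [set x in DEL | (#|x| <= k)%N] :|: S in
  reduced_betti L k = 0 /\ reduced_betti L k.-1 = 0.

Definition increasing_weight (k : nat) (w : {set 'I_n} -> R) : Prop :=
  forall x y, x \in DELk k -> y \in DELk k -> prec k x y -> w x < w y.

Definition is_MSA (k : nat) (S : {set {set 'I_n}}) : Prop :=
  spanning_acycle k S /\
  forall w, increasing_weight k w ->
  forall S', spanning_acycle k S' -> \sum_(x in S) w x <= \sum_(x in S') w x.

Definition filt_bd (s : seq {set 'I_n}) : 'M[F]_(size s) :=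
  \matrix_(a < size s, b < size s) bdcoef F (nth set0 s a) (nth set0 s b).

Definition rk (s : seq {set 'I_n}) (a b : nat) : nat :=
  \rank (\matrix_(x < size s, y < size s)
           if (a <= x)%N && (y < b)%N then filt_bd s x y else 0).

(* (nth s i, nth s j) is a persistence pair (Pairing Lemma characterization:
   the lowest nonzero entry of column j of the reduced boundary matrix is in row i) *)
Definition persistence_pair (s : seq {set 'I_n}) (i j : nat) : Prop :=
  [/\ (i < size s)%N, (j < size s)%N &
      (rk s i j.+1 + rk s i.+1 j = rk s i.+1 j.+1 + rk s i j + 1)%N].

End Homology.
End Geometry.

(* If the creator [sigma] of a pair [(sigma, tau)] with [diam sigma < diam tau] were the
   maximal facet of a coface [t], then [diam t <= diam sigma < diam tau] would put [t]
   before [tau] in the filtration, and, all other facets of [t] preceding [sigma], the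
   column of [t] would have its lowest nonzero entry in the row of [sigma]; the rank
   identity characterising the pair forbids this, so [sigma] lies in USC^k.
   The same identity yields a chain supported before [tau] whose boundary has its
   lowest nonzero coefficient at [sigma]; since the boundary of a boundary vanishes,
   the boundary of [sigma] is a combination of boundaries of k-simplices preceding
   [sigma]. A spanning acycle containing [sigma] could exchange it for one of them and
   thus would not be minimal for the weight "position in the filtration". *)

From HB Require Import structures.
From mathcomp Require Import all_boot all_order all_algebra.
From mathcomp Require Import boolp reals zify ring.
Set Implicit Arguments. Unset Strict Implicit. Unset Printing Implicit Defensive.
Import Order.TTheory GRing.Theory Num.Theory.
Local Open Scope ring_scope.

Lemma lexltxx s : lexlt s s = false.
Proof. by elim: s => //= x s ->; rewrite ltnn eqxx. Qed.

Lemma lexlt_trans s t u : lexlt s t -> lexlt t u -> lexlt s u.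
Proof.
elim: s t u => [|x s IH] [|y t] [|z u] //=.
case/orP=> [xy|/andP[/eqP<- st]]; case/orP=> [yz|/andP[/eqP<- tu]].
- by rewrite (ltn_trans xy yz).
- by rewrite xy.
- by rewrite yz.
- by rewrite eqxx (IH _ _ st tu) orbT.
Qed.

Lemma lexlt_total s t : s != t -> lexlt s t || lexlt t s.
Proof.
elim: s t => [|x s IH] [|y t] //=.
case: (ltngtP x y) => //= -> /=; rewrite eqseq_cons eqxx /=.
by move/IH; rewrite orbC.
Qed.

Lemma labels_inj n : injective (@labels n).
Proof.
move=> s t e; apply/setP => x.
have: (val x \in labels s) = (val x \in labels t) by rewrite e.
by rewrite !mem_sort !(mem_map val_inj) !mem_enum.
Qed.

Section Simplices.
Variable n : nat.
Implicit Types (f g t x : {set 'I_n}).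

Lemma lexprecxx x : lexprec x x = false.
Proof. exact: lexltxx. Qed.

Lemma lexprec_trans x y z : lexprec x y -> lexprec y z -> lexprec x z.
Proof. exact: lexlt_trans. Qed.

Lemma lexprec_total x y : x != y -> lexprec x y || lexprec y x.
Proof. by move=> xy; apply: lexlt_total; apply: contra xy => /eqP/labels_inj->. Qed.

Lemma facet_card f t : facet f t -> #|t| = #|f|.+1.
Proof. by case/andP=> _ /eqP. Qed.

Lemma facet_sub f t : facet f t -> f \subset t.
Proof. by case/andP. Qed.

Lemma facetD1 t v : v \in t -> facet (t :\ v) t.
Proof. by move=> vt; rewrite /facet subD1set (cardsD1 v t) vt add1n eqxx. Qed.

Lemma facetP f t : reflect (exists2 v, v \in t & f = t :\ v) (facet f t).
Proof.
apply: (iffP idP) => [/andP[ft /eqP ct]|[v vt ->]]; last exact: facetD1.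
have /cards1P[v tf] : #|t :\: f| == 1%N by rewrite cardsD (setIidPr ft) ct subSnn.
have vt : v \in t by have := set11 v; rewrite -tf => /setDP[].
exists v => //; apply/setP => u; rewrite in_setD1.
have /setP/(_ u) := tf; rewrite !inE.
case: (boolP (u \in f)) => [uf|_] /=; last by move=> ->; case: eqP.
by rewrite (subsetP ft u uf) andbT => /esym/eqP/eqP.
Qed.

Lemma maxfacet_withP (r : rel {set 'I_n}) t :
  t != set0 -> irreflexive r -> transitive r ->
  (forall f g, facet f t -> facet g t -> f != g -> r f g || r g f) ->
  facet (maxfacet_with r t) t /\
  (forall g, facet g t -> g != maxfacet_with r t -> r g (maxfacet_with r t)).
Proof.
move=> /set0Pn[v vt] irr tr tot.
pose below f := [set g | facet g t && r g f].
(* A facet dominating the most facets dominates all of them. *)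
have [f ft fmax] :=
  @arg_maxnP _ (t :\ v) (fun f => facet f t) (fun f => #|below f|) (facetD1 vt).
have fmaxr : [forall g, (facet g t && (g != f)) ==> r g f].
  apply/forallP => g; apply/implyP => /andP[gt gf]; apply/negPn/negP => ngf.
  have rfg : r f g by move: (tot _ _ gt ft gf); rewrite (negbTE ngf).
  have : below f \proper below g.
    apply/properP; split; last by exists f; rewrite !inE ?ft ?rfg ?irr.
    by apply/subsetP => h; rewrite !inE => /andP[-> hf]; exact: tr _ _ _ hf rfg.
  have le_gf : (#|below g| <= #|below f|)%N := fmax g gt.
  by move/proper_card; rewrite ltnNge le_gf.
rewrite /maxfacet_with; case: pickP => [m /andP[mt /forallP mmax]|/(_ f)].
  by split=> // g gt gm; move: (mmax g); rewrite gt gm.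
by rewrite ft fmaxr.
Qed.

End Simplices.

Section Diameter.
Variables (R : realType) (d n : nat) (P : 'I_n -> 'rV[R]_d).
Implicit Types (f g t x y z : {set 'I_n}).

Lemma diam_ge0 x : 0 <= diam P x.
Proof.
apply: (big_ind (fun r => 0 <= r)) => // [r r'|a _]; first by rewrite le_max => ->.
apply: (big_ind (fun r => 0 <= r)) => // [r r'|b _]; first by rewrite le_max => ->.
exact: sqrtr_ge0.
Qed.

Lemma edist_le_diam x a b : a \in x -> b \in x -> edist (P a) (P b) <= diam P x.
Proof. by move=> ax bx; apply: le_trans (le_bigmax_cond _ _ ax); apply: le_bigmax_cond. Qed.

Lemma diam_le x r : 0 <= r ->
  (forall a b, a \in x -> b \in x -> edist (P a) (P b) <= r) -> diam P x <= r.
Proof.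
move=> r0 le_r; apply/bigmax_leP; split=> // a ax.
by apply/bigmax_leP; split=> // b bx; exact: le_r.
Qed.

Lemma diamS x y : x \subset y -> diam P x <= diam P y.
Proof.
move=> xy; apply: diam_le (diam_ge0 y) _ => a b ax bx.
by apply: edist_le_diam; apply: (subsetP xy).
Qed.

Lemma diam_le_facets t r : (2 < #|t|)%N ->
  (forall f, facet f t -> diam P f <= r) -> diam P t <= r.
Proof.
move=> t3 le_r; have [v vt] : exists v, v \in t by apply/set0Pn; rewrite -card_gt0; lia.
apply: diam_le => [|a b ha hb]; first exact: le_trans (diam_ge0 _) (le_r _ (facetD1 vt)).
have [c] : exists c, c \in t :\ a :\ b.
  apply/set0Pn; rewrite -card_gt0.
  by move: (cardsD1 a t) (cardsD1 b (t :\ a)); rewrite ha; case: (b \in _); lia.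
rewrite !in_setD1 => /and3P[cb ca ct].
apply: le_trans (le_r _ (facetD1 ct)).
by apply: edist_le_diam; rewrite in_setD1 ?ha ?hb andbT eq_sym.
Qed.

Lemma precxx m : irreflexive (prec_aux P m).
Proof. by elim: m => [|m IH] x /=; rewrite ?ltxx ?IH eqxx lexprecxx. Qed.

Lemma prec_trans m : transitive (prec_aux P m).
Proof.
elim: m => [|m IH] y x z /=.
  case/orP=> [lxy|/andP[/eqP-> lxy]]; case/orP=> [lyz|/andP[/eqP<- lyz]].
  - by rewrite (lt_trans lxy lyz).
  - by rewrite lxy.
  - by rewrite lyz.
  - by rewrite eqxx (lexprec_trans lxy lyz) orbT.
case/orP=> [lxy|/andP[/eqP exy lxy]]; case/orP=> [lyz|/andP[/eqP eyz lyz]].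
- by rewrite (IH _ _ _ lxy lyz).
- by rewrite -eyz lxy.
- by rewrite exy lyz.
- by rewrite exy eyz eqxx (lexprec_trans lxy lyz) orbT.
Qed.

Lemma maxfacet_precP m t :
  (forall x y, #|x| = m.+2 -> #|y| = m.+2 -> x != y ->
     prec_aux P m x y || prec_aux P m y x) ->
  #|t| = m.+3 ->
  facet (maxfacet_with (prec_aux P m) t) t /\
  (forall g, facet g t -> g != maxfacet_with (prec_aux P m) t ->
     prec_aux P m g (maxfacet_with (prec_aux P m) t)).
Proof.
move=> tot ct; apply: maxfacet_withP; [by rewrite -card_gt0 ct|exact: precxx|
  exact: prec_trans|].
by move=> f g /facet_card cf /facet_card cg; apply: tot; lia.
Qed.

Lemma prec_total m x y : #|x| = m.+2 -> #|y| = m.+2 -> x != y ->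
  prec_aux P m x y || prec_aux P m y x.
Proof.
elim: m x y => [|m IH] x y cx cy xy /=.
  by case: ltgtP => //= _; exact: lexprec_total.
have [/facet_card fx _] := maxfacet_precP IH cx.
have [/facet_card fy _] := maxfacet_precP IH cy.
have [->|ne] := eqVneq (maxfacet_with (prec_aux P m) x) (maxfacet_with (prec_aux P m) y).
  by rewrite precxx /= lexprec_total.
by rewrite !andFb !orbF IH //; lia.
Qed.

Lemma prec_diam m x y : #|x| = m.+2 -> #|y| = m.+2 ->
  prec_aux P m x y -> diam P x <= diam P y.
Proof.
elim: m x y => [|m IH] x y cx cy /=; first by case/orP=> [/ltW|/andP[/eqP-> _]].
have [mfx mfx_max] := maxfacet_precP (@prec_total m) cx.
have [mfy _] := maxfacet_precP (@prec_total m) cy.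
set mx := maxfacet_with _ x in mfx mfx_max *; set my := maxfacet_with _ y in mfy *.
have le_x : diam P x <= diam P mx.
  apply: diam_le_facets => [|f fx]; first by rewrite cx.
  have [->//|ne] := eqVneq f mx.
  by apply: IH (mfx_max _ fx ne); move/facet_card: fx; move/facet_card: mfx; lia.
move=> pxy; apply: le_trans le_x _; apply: le_trans _ (diamS (facet_sub mfy)).
case/orP: pxy => [|/andP[/eqP-> _]//]; apply: IH.
- by move/facet_card: mfx; lia.
- by move/facet_card: mfy; lia.
Qed.

Lemma diam_maxfacet m t : #|t| = m.+3 ->
  diam P t <= diam P (maxfacet_with (prec_aux P m) t).
Proof.
move=> ct; have [mft mft_max] := maxfacet_precP (@prec_total m) ct.
apply: diam_le_facets => [|f ft]; first by rewrite ct.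
have [->//|ne] := eqVneq f (maxfacet_with (prec_aux P m) t).
by apply: prec_diam (mft_max _ ft ne); move/facet_card: ft; move/facet_card: mft; lia.
Qed.

End Diameter.

Section Boundary.
Variables (F : fieldType) (n : nat).
Implicit Types (x y z : {set 'I_n}) (a b v : 'I_n).

Lemma bdcoefD1 y v : v \in y ->
  bdcoef F (y :\ v) y = (-1) ^+ #|[set u in y | (u < v)%N]|.
Proof.
move=> vy; rewrite /bdcoef facetD1 //.
have -> : y :\: (y :\ v) = [set v].
  by apply/setP => u; rewrite !inE; case: eqP => [->|] /=; rewrite ?vy ?andNb.
by rewrite big_set1.
Qed.

Lemma bdcoef_neq0 x y : (bdcoef F x y != 0) = facet x y.
Proof.
apply/idP/idP => [|/facetP[v vy ->]]; first by rewrite /bdcoef; case: ifP; rewrite ?eqxx.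
by rewrite bdcoefD1 // signr_eq0.
Qed.

Lemma bdcoef_eq0 x y : (bdcoef F x y == 0) = ~~ facet x y.
Proof. by rewrite -bdcoef_neq0 negbK. Qed.

Lemma bdcoef_mul_eq0 x y z :
  ~~ (facet x y && facet y z) -> bdcoef F x y * bdcoef F y z = 0.
Proof. by rewrite -!bdcoef_neq0 negb_and !negbK => /orP[]/eqP->; rewrite ?mul0r ?mulr0. Qed.

Lemma setD1C y a b : y :\ a :\ b = y :\ b :\ a.
Proof. by rewrite !setDDl setUC. Qed.

(* The two ways of removing [a < b] from [y] carry opposite signs, because
   removing [a] first shifts the position of [b] by one. *)
Lemma bdcoef_square y a b : a \in y -> b \in y -> (a < b)%N ->
  bdcoef F (y :\ a :\ b) (y :\ a) * bdcoef F (y :\ a) y +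
  bdcoef F (y :\ a :\ b) (y :\ b) * bdcoef F (y :\ b) y = 0.
Proof.
move=> ha hb ab.
have below_a : [set u in y :\ b | (u < a)%N] = [set u in y | (u < a)%N].
  apply/setP => u; rewrite !inE; case: ltnP => ua; rewrite ?andbF ?andbT //.
  by case: eqP => // ub; move: ua; rewrite ub ltnNge ltnW.
have below_b : #|[set u in y | (u < b)%N]| = (#|[set u in y :\ a | (u < b)%N]|).+1.
  rewrite (cardsD1 a) inE ha ab add1n; congr _.+1.
  by apply: eq_card => u; rewrite !inE andbA.
rewrite {2}setD1C !bdcoefD1 ?in_setD1 ?ha ?hb ?below_a ?below_b ?exprS; first by ring.
all: by rewrite ?andbT // -val_eqE /= neq_ltn ab ?orbT.
Qed.

Lemma bdcoef_bdcoef x y : \sum_z bdcoef F x z * bdcoef F z y = 0.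
Proof.
have [/existsP[z /andP[/facetP[b zb ->] /facetP[a ha ez]]]|none] :=
  boolP [exists z, facet x z && facet z y]; last first.
  by apply: big1 => z _; apply: bdcoef_mul_eq0; move/existsPn: none.
move: zb; rewrite {z}ez in_setD1 => /andP[ba hb].
wlog ab : a b ha hb ba / (a < b)%N.
  move=> abP; case: (ltngtP a b) => [|lt_ba|/val_inj eab]; first exact: abP.
  - by rewrite setD1C; apply: abP; rewrite // eq_sym.
  - by rewrite eab eqxx in ba.
have two_facets z :
    facet (y :\ a :\ b) z && facet z y -> (z == y :\ a) || (z == y :\ b).
  case/andP=> /facet_sub sub /facetP[c hc ez]; subst z.
  have : c \notin y :\ a :\ b by apply/negP => /(subsetP sub); rewrite setD11.
  by rewrite !inE hc andbT negb_and !negbK => /orP[]/eqP->; rewrite eqxx ?orbT.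
rewrite (bigD1 (y :\ a)) // (bigD1 (y :\ b)) /=; last first.
  by apply/eqP => /setP/(_ a); rewrite !inE eqxx ha eq_sym ba.
rewrite big1 ?addr0 => [|z /andP[za zb]]; first exact: bdcoef_square.
by apply/bdcoef_mul_eq0/negP => /two_facets; rewrite (negbTE za) (negbTE zb).
Qed.

End Boundary.

Section LowerLeft.
Variables (F : fieldType) (m n : nat) (M : 'M[F]_(m, n)).

Definition lowerleft (a b : nat) : 'M[F]_(m, n) :=
  \matrix_(x, y) if (a <= x)%N && (y < b)%N then M x y else 0.

Lemma lowerleftS a b : (lowerleft a.+1 b <= lowerleft a b)%MS.
Proof.
apply/row_subP => r; have [ra|ra] := eqVneq (val r) a.
  have -> : row r (lowerleft a.+1 b) = 0 by apply/rowP => y; rewrite !mxE ra ltnn.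
  exact: sub0mx.
have -> : row r (lowerleft a.+1 b) = row r (lowerleft a b).
  by apply/rowP => y; rewrite !mxE ltn_neqAle eq_sym ra.
exact: row_sub.
Qed.

Lemma rank_lowerleftS a b : (\rank (lowerleft a.+1 b) <= \rank (lowerleft a b))%N.
Proof. exact/mxrankS/lowerleftS. Qed.

Lemma rank_lowerleft_pivot (i : 'I_m) (l : 'I_n) b : (l < b)%N ->
  M i l != 0 -> (forall r : 'I_m, (i < r)%N -> M r l = 0) ->
  \rank (lowerleft i b) = (\rank (lowerleft i.+1 b)).+1.
Proof.
move=> lb Mil below; set A := lowerleft i b; set B := lowerleft i.+1 b.
have rowiA : ~~ (row i A <= B)%MS.
  apply/negP => /submxP[D /(congr1 (fun N : 'M_(1, n) => N 0 l))].
  rewrite !mxE leqnn lb /= big1 => [Mil0|r _]; first by rewrite Mil0 eqxx in Mil.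
  by rewrite !mxE; case: ifP => [/andP[/below-> _]|_]; rewrite mulr0.
apply/eqP; rewrite eqn_leq; apply/andP; split; last first.
  apply: rank_ltmx; rewrite ltmxE lowerleftS.
  by apply: contra rowiA; apply: submx_trans (row_sub i A).
have /mxrankS : (A <= B + row i A)%MS.
  apply/row_subP => r; have [->|ri] := eqVneq r i; first exact: addsmxSr.
  have -> : row r A = row r B.
    by apply/rowP => y; rewrite !mxE [(i < r)%N]ltn_neqAle val_eqE eq_sym ri.
  exact: submx_trans (row_sub r B) (addsmxSl _ _).
move/leq_trans; apply; apply: leq_trans (mxrank_adds_leqif _ _) _.
by rewrite -[X in (_ <= X)%N]addn1 leq_add2l rank_leq_row.
Qed.

Lemma lowerleft_rank_gap (i : 'I_m) b :
  (\rank (lowerleft i.+1 b) < \rank (lowerleft i b))%N ->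
  exists c : 'cV[F]_n, [/\ forall l : 'I_n, (b <= l)%N -> c l 0 = 0,
    (M *m c) i 0 != 0 & forall r : 'I_m, (i < r)%N -> (M *m c) r 0 = 0].
Proof.
set A := lowerleft i b; set B := lowerleft i.+1 b => gap.
have [u uB uA] : exists2 u : 'rV_n, u *m B^T = 0 & u *m A^T != 0.
  have : ~~ (kermx B^T <= kermx A^T)%MS.
    apply: contraL gap => /mxrankS; rewrite !mxrank_ker !mxrank_tr.
    by move: (rank_leq_col A) (rank_leq_col B); lia.
  case/row_subPn => r; rewrite sub_kermx => nA.
  by exists (row r (kermx B^T)); rewrite // -row_mul mulmx_ker row0.
pose c : 'cV_n := \col_l (if (l < b)%N then u 0 l else 0).
have entry a (q : 'I_m) :
    (u *m (lowerleft a b)^T) 0 q = if (a <= q)%N then (M *m c) q 0 else 0.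
  rewrite !mxE; case: leqP => aq; last by apply: big1 => l _; rewrite !mxE leqNgt aq mulr0.
  by apply: eq_bigr => l _; rewrite !mxE aq /=; case: ifP; rewrite ?mulr0 // mulrC.
have below (r : 'I_m) : (i < r)%N -> (M *m c) r 0 = 0.
  by move=> ir; move/rowP/(_ r): uB; rewrite entry ir !mxE.
exists c; split=> // [l|]; first by rewrite mxE leqNgt => /negbTE->.
apply: contra_neq uA => Mci; apply/rowP => q; rewrite entry [RHS]mxE.
by case: (ltngtP i q) => [/below|//|/val_inj<-].
Qed.

Local Notation rank_ll a b := (\rank (lowerleft a b)).

Lemma pair_rank_gap i j :
  (rank_ll i j.+1 + rank_ll i.+1 j = rank_ll i.+1 j.+1 + rank_ll i j + 1)%N ->
  (rank_ll i.+1 j.+1 < rank_ll i j.+1)%N.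
Proof. by move: (rank_lowerleftS i j); lia. Qed.

Lemma pair_no_earlier_pivot (i : 'I_m) (l : 'I_n) j :
  (rank_ll i j.+1 + rank_ll i.+1 j = rank_ll i.+1 j.+1 + rank_ll i j + 1)%N ->
  (l < j)%N -> M i l != 0 -> (forall r : 'I_m, (i < r)%N -> M r l = 0) -> False.
Proof.
move=> pair lj Mil below.
have := rank_lowerleft_pivot (ltn_trans lj (ltnSn j)) Mil below.
by move: pair (rank_lowerleft_pivot lj Mil below); lia.
Qed.

End LowerLeft.

Section Span.
Variables (F : fieldType) (I : finType) (N : nat) (f : I -> 'rV[F]_N).
Implicit Types (A T : {set I}) (x y : I).

Definition span_of A : 'M[F]_N := (\sum_(y in A) <<f y>>)%MS.

Lemma span_of_sub A y : y \in A -> (f y <= span_of A)%MS.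
Proof. by move=> yA; apply: (sumsmx_sup y) => //; rewrite genmxE. Qed.

Lemma rank_span_of_le A : (\rank (span_of A) <= #|A|)%N.
Proof.
apply: leq_trans (leq_of_leqif (mxrank_sum_leqif _)) _.
by rewrite -sum1_card leq_sum // => y _ /=; rewrite genmxE rank_leq_row.
Qed.

Lemma span_ofU1 A y : y \notin A -> span_of (y |: A) = (<<f y>> + span_of A)%MS.
Proof.
move=> yA; rewrite /span_of (bigD1 y) ?setU11 //=; congr (_ + _)%MS.
by apply: eq_bigl => z; rewrite !inE; case: eqVneq => [->|] /=; rewrite ?(negbTE yA) ?andbT.
Qed.

Lemma rank_span_ofU1_le A y : y \notin A ->
  (\rank (span_of (y |: A)) <= (\rank (span_of A)).+1)%N.
Proof.
move=> yA; rewrite span_ofU1 //; apply: leq_trans (mxrank_adds_leqif _ _) _.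
by rewrite genmxE -[X in (_ <= X)%N]add1n leq_add2r rank_leq_row.
Qed.

Lemma rank_span_ofU1 A y : y \notin A -> ~~ (f y <= span_of A)%MS ->
  \rank (span_of (y |: A)) = (\rank (span_of A)).+1.
Proof.
move=> yA fyA; apply/eqP; rewrite eqn_leq rank_span_ofU1_le //=.
apply: rank_ltmx; rewrite ltmxE span_ofU1 // addsmxSr /=.
apply: contra fyA => sub; apply: submx_trans sub.
by apply: submx_trans (addsmxSl _ _); rewrite genmxE.
Qed.

Lemma span_of_exchange A T x : x \in A -> \rank (span_of A) = #|A| ->
  (f x <= span_of T)%MS ->
  exists2 y, y \in T & y \notin A :\ x /\ \rank (span_of (y |: A :\ x)) = #|A|.
Proof.
move=> xA freeA fxT; have cardA : #|A| = #|A :\ x|.+1 by rewrite (cardsD1 x A) xA.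
have A_x : A = x |: A :\ x by rewrite setD1K.
have freeA_x : \rank (span_of (A :\ x)) = #|A :\ x|.
  apply/eqP; rewrite eqn_leq rank_span_of_le -ltnS -cardA -freeA {1}A_x.
  by rewrite rank_span_ofU1_le // setD11.
have [y yT fyA_x] : exists2 y, y \in T & ~~ (f y <= span_of (A :\ x))%MS.
  apply/exists_inP; apply: contraTT (rank_span_of_le (A :\ x)) => /exists_inPn in_span.
  have : (span_of A <= span_of (A :\ x))%MS.
    rewrite {1}A_x span_ofU1 ?setD11 // addsmx_sub submx_refl andbT genmxE.
    apply: submx_trans fxT _; apply/sumsmx_subP => y yT; rewrite genmxE.
    by move: (in_span y yT); rewrite negbK.
  by move/mxrankS; rewrite freeA cardA -ltnNge.
have yA_x : y \notin A :\ x by apply: contra fyA_x; apply: span_of_sub.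
by exists y => //; split; rewrite // rank_span_ofU1 // freeA_x cardA.
Qed.

End Span.

Section Betti.
Variables (R : realType) (d n : nat) (P : 'I_n -> 'rV[R]_d) (F : fieldType) (k : nat).
Implicit Types (x y z : {set 'I_n}) (S : {set {set 'I_n}}).
Local Notation N := (size (allsets n)).
Local Notation cell a := (nth set0 (allsets n) a).

Lemma DEL_sub x y : y \in DEL P -> x \subset y -> x != set0 -> x \in DEL P.
Proof.
rewrite !inE => /asboolP[_ [c [r [on_sphere outside]]]] xy x0; apply/asboolP.
by split=> //; exists c, r; split=> // i /(subsetP xy); apply: on_sphere.
Qed.

Definition bdrow y : 'rV[F]_N := \row_a bdcoef F (cell a) y.

Definition bdmx S : 'M[F]_N :=
  \matrix_(b, a) if cell b \in S then bdcoef F (cell a) (cell b) else 0.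

Lemma bdmx_span S : (bdmx S == span_of bdrow S)%MS.
Proof.
have index_allsets y : (index y (allsets n) < N)%N by rewrite index_mem mem_enum inE.
apply/andP; split.
  apply/row_subP => b; case Sb: (cell b \in S).
    have -> : row b (bdmx S) = bdrow (cell b) by apply/rowP => a; rewrite !mxE Sb.
    exact: span_of_sub.
  have -> : row b (bdmx S) = 0 by apply/rowP => a; rewrite !mxE Sb.
  exact: sub0mx.
apply/sumsmx_subP => y yS; rewrite genmxE.
have -> : bdrow y = row (Ordinal (index_allsets y)) (bdmx S).
  by apply/rowP => a; rewrite !mxE /= nth_index ?mem_enum ?inE ?yS.
exact: row_sub.
Qed.

Definition skelU S := [set x in DEL P | (#|x| <= k)%N] :|: S.

Lemma mem_skelU_top S y : #|y| = k.+1 -> (y \in set0 |: skelU S) = (y \in S).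
Proof.
move=> cy; rewrite !inE cy ltnn andbF /=.
by case: eqP => // y0; move: cy; rewrite y0 cards0.
Qed.

Lemma mem_skelU_other S z : S \subset DELk P k -> #|z| != k.+1 ->
  (z \in skelU S) = (z \in DEL P) && (#|z| <= k)%N.
Proof.
move=> SD cz; rewrite !inE orbC; case zS: (z \in S) => //=.
by move: (subsetP SD z zS) cz; rewrite inE => /andP[_ ->].
Qed.

Lemma facet_mem_skelU S x y : y \in DEL P -> #|y| = k.+1 -> facet x y ->
  x \in set0 |: skelU S.
Proof.
move=> yD cy xy; rewrite in_setU1 in_setU in_set; case: eqP => //= /eqP x0.
rewrite (DEL_sub yD (facet_sub xy) x0); move/facet_card: xy; rewrite cy => -[->].
by rewrite leqnn.
Qed.

Lemma chainbd_top S : S \subset DELk P k ->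
  chainbd F (set0 |: skelU S) k = (bdmx S)^T.
Proof.
move=> SD; apply/matrixP => a b; rewrite !mxE; cbv zeta.
case: (eqVneq #|cell b| k.+1) => [cb|cb]; last first.
  rewrite andbF; case: ifP => // Sb.
  by move: (subsetP SD _ Sb) cb; rewrite inE => /andP[_ ->].
rewrite (mem_skelU_top S cb) andbT andbC.
case Sb: (cell b \in S) => //=; case: ifP => // /negbT xL.
apply/esym/eqP; apply: contraNT xL; rewrite bdcoef_neq0; apply: facet_mem_skelU cb.
by move: (subsetP SD _ Sb); rewrite inE => /andP[].
Qed.

Lemma chainbd_above S : S \subset DELk P k -> chainbd F (set0 |: skelU S) k.+1 = 0.
Proof.
move=> SD; apply/matrixP => a b; rewrite !mxE; cbv zeta.
case: (eqVneq #|cell b| k.+2) => [cb|]; last by rewrite andbF.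
suff -> : cell b \in set0 |: skelU S = false by rewrite andbF.
rewrite in_setU1 (mem_skelU_other SD) cb ?ltnNge ?leqnSn ?andbF ?orbF; last lia.
by apply/eqP => b0; move: cb; rewrite b0 cards0.
Qed.

Lemma skelU_top S : S \subset DELk P k -> [set x in skelU S | #|x| == k.+1] = S.
Proof.
move=> SD; apply/setP => x; rewrite !in_set.
case: (eqVneq #|x| k.+1) => [cx|cx]; first by rewrite cx ltnn andbF andbT.
rewrite andbF; apply/esym/negbTE; apply: contra cx => /(subsetP SD).
by rewrite in_set => /andP[].
Qed.

Lemma betti_top S : S \subset DELk P k ->
  reduced_betti F (skelU S) k = (#|S|)%:Z - (\rank (span_of bdrow S))%:Z.
Proof.
move=> SD; rewrite /reduced_betti skelU_top // chainbd_top // chainbd_above //.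
by rewrite mxrank_tr mxrank0 (eqmx_rank (bdmx_span S)) subr0.
Qed.

Lemma mem_skelU0_other S S' z : S \subset DELk P k -> S' \subset DELk P k ->
  #|z| != k.+1 -> (z \in set0 |: skelU S) = (z \in set0 |: skelU S').
Proof.
by move=> SD S'D cz; rewrite !in_setU1 (mem_skelU_other SD) ?(mem_skelU_other S'D).
Qed.

Lemma betti_below S S' : (1 <= k)%N -> S \subset DELk P k -> S' \subset DELk P k ->
  \rank (span_of bdrow S) = \rank (span_of bdrow S') ->
  reduced_betti F (skelU S) k.-1 = reduced_betti F (skelU S') k.-1.
Proof.
move=> k1 SD S'D rkS; rewrite /reduced_betti prednK // !chainbd_top // !mxrank_tr.
rewrite !(eqmx_rank (bdmx_span _)) rkS; congr (_ - _ - _).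
  congr Posz; apply: eq_card => x; rewrite [in LHS]in_set [in RHS]in_set.
  case: (eqVneq #|x| k) => [cx|]; rewrite ?andbF //.
  by rewrite !(mem_skelU_other _ (z := x)) // cx neq_ltn ltnSn.
congr (Posz (\rank _)); apply/matrixP => a b; rewrite !mxE; cbv zeta.
rewrite prednK //; case: (eqVneq #|cell b| k) => [cb|]; rewrite ?andbF //.
rewrite [cell b \in _](mem_skelU0_other SD S'D) ?cb ?neq_ltn ?ltnSn ?orbT //.
case: (eqVneq #|cell a| k.+1) => [ca|ca]; last by rewrite (mem_skelU0_other SD S'D).
suff -> : bdcoef F (cell a) (cell b) = 0 by rewrite !if_same.
by apply/eqP; rewrite bdcoef_eq0; apply/negP => /facet_card; rewrite ca cb; lia.
Qed.

Lemma spanning_acycle_free S : spanning_acycle P F k S ->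
  \rank (span_of bdrow S) = #|S|.
Proof.
case=> SD [betti0 _]; move: betti0; rewrite -/(skelU S) betti_top //.
by move/eqP; rewrite subr_eq0 => /eqP[].
Qed.

Lemma spanning_acycle_exchange S S' : (1 <= k)%N -> spanning_acycle P F k S ->
  S' \subset DELk P k -> #|S'| = #|S| -> \rank (span_of bdrow S') = #|S| ->
  spanning_acycle P F k S'.
Proof.
move=> k1 acS S'D cS' rkS'; have rkS := spanning_acycle_free acS.
case: acS => SD [_ betti1]; split=> //; split; rewrite -/(skelU S').
  by rewrite betti_top // rkS' cS' subrr.
by rewrite (betti_below k1 S'D SD) ?rkS.
Qed.

End Betti.

Section Refinement.
Variables (R : realType) (d n : nat) (P : 'I_n -> 'rV[R]_d) (F : fieldType).
Variables (k : nat) (k_gt0 : (0 < k)%N) (s : seq {set 'I_n}).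
Hypothesis s_refines : simplexwise_refinement P s.
Implicit Types (g t x y : {set 'I_n}).
Local Notation simplex a := (nth set0 s a).

Lemma prec_totalk x y : #|x| = k.+1 -> #|y| = k.+1 -> x != y ->
  prec P k x y || prec P k y x.
Proof. by move=> cx cy; apply: prec_total; rewrite prednK. Qed.

Lemma maxbdP t : #|t| = k.+2 -> facet (maxbd P k t) t /\
  (forall g, facet g t -> g != maxbd P k t -> prec P k g (maxbd P k t)).
Proof. by move=> ct; apply: maxfacet_precP; [exact: prec_total | rewrite prednK]. Qed.

Lemma diam_maxbd t : #|t| = k.+2 -> diam P t <= diam P (maxbd P k t).
Proof. by move=> ct; apply: diam_maxfacet; rewrite prednK. Qed.

Lemma refinement_uniq : uniq s. Proof. by case: s_refines. Qed.

Lemma mem_refinement x : (x \in s) = (x \in DEL P).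
Proof. by case: s_refines => _ mem_s _ _ _; apply: mem_s. Qed.

Lemma refinement_diam x y : x \in s -> y \in s -> diam P x < diam P y ->
  (index x s < index y s)%N.
Proof. by case: s_refines => _ _ _ ord_diam _; apply: ord_diam. Qed.

Lemma refinement_prec x y : x \in s -> y \in s -> #|x| = k.+1 -> #|y| = k.+1 ->
  prec P k x y -> (index x s < index y s)%N.
Proof. by case: s_refines => _ _ _ _ ord_prec; apply: ord_prec. Qed.

Lemma mem_DELk x : (x \in DELk P k) = (x \in DEL P) && (#|x| == k.+1).
Proof. by rewrite in_set. Qed.

Lemma index_simplex a : (a < size s)%N -> index (simplex a) s = a.
Proof. by move=> a_s; rewrite index_uniq // refinement_uniq. Qed.

Lemma rk_lowerleft a b : rk F s a b = \rank (lowerleft (filt_bd F s) a b).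
Proof. by []. Qed.

Lemma index_facet_le_maxbd t g : t \in DEL P -> #|t| = k.+2 -> facet g t ->
  (index g s <= index (maxbd P k t) s)%N.
Proof.
move=> tD ct gt; have [mt mt_max] := maxbdP ct.
have [->//|ne] := eqVneq g (maxbd P k t).
have cg : #|g| = k.+1 by move/facet_card: gt; rewrite ct => -[].
have cm : #|maxbd P k t| = k.+1 by move/facet_card: mt; rewrite ct => -[].
have in_s f : facet f t -> f \in s.
  move=> ft; rewrite mem_refinement (DEL_sub tD (facet_sub ft)) // -card_gt0.
  by move/facet_card: ft; rewrite ct => -[<-].
by apply/ltnW/refinement_prec; rewrite ?in_s //; apply: mt_max.
Qed.

Lemma creator_USC i j : persistence_pair F s i j -> #|simplex i| = k.+1 ->
  diam P (simplex i) < diam P (simplex j) -> USC P k (simplex i).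
Proof.
case=> i_s j_s; rewrite !rk_lowerleft => pair ci diam_ij.
have i_DEL : simplex i \in DEL P by rewrite -mem_refinement mem_nth.
split=> [|t]; first by rewrite inE i_DEL ci eqxx.
rewrite inE => /andP[tD /eqP ct] it; have [_ mt_max] := maxbdP ct.
apply/negPn/negP => not_prec.
have ft : facet (simplex i) t by rewrite /facet it ct ci eqxx.
have i_max : simplex i = maxbd P k t.
  by apply/eqP; apply: contraNT not_prec; apply: mt_max ft.
have t_s : t \in s by rewrite mem_refinement.
have t_j : (index t s < j)%N.
  rewrite -(index_simplex j_s); apply: refinement_diam; rewrite ?mem_nth //.
  by apply: le_lt_trans diam_ij; rewrite i_max diam_maxbd.
have t_idx : (index t s < size s)%N by rewrite index_mem.
apply: (pair_no_earlier_pivot (i := Ordinal i_s) (l := Ordinal t_idx) pair t_j).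
  by rewrite mxE nth_index // bdcoef_neq0.
move=> r ir; rewrite mxE nth_index //; apply/eqP; rewrite bdcoef_eq0.
apply: contraTN ir => /(index_facet_le_maxbd tD ct).
by rewrite -i_max !index_simplex // -leqNgt.
Qed.

Lemma bdcoef_bdcoef_refinement x y : y \in DEL P ->
  \sum_(q < size s | #|simplex q| == k.+1)
    bdcoef F x (simplex q) * bdcoef F (simplex q) y = 0.
Proof.
move=> yD; pose f z := bdcoef F x z * bdcoef F z y.
change (\sum_(q < size s | #|simplex q| == k.+1) f (simplex q) = 0).
have dims z : f z != 0 -> #|z| = #|x|.+1.
  by rewrite mulf_eq0 negb_or !bdcoef_neq0 => /andP[/facet_card].
pose g (q : 'I_(size s)) := if #|x| == k then f (simplex q) else 0.
rewrite big_mkcond (eq_bigr g) => [|q _]; last first.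
  rewrite /g; have [->|/dims->] := eqVneq (f (simplex q)) 0; first by rewrite !if_same.
  by rewrite eqSS.
rewrite /g; case: eqP => _; last by rewrite big1.
have -> : \sum_(q < size s) f (simplex q) = \sum_(z <- s) f z.
  by rewrite (big_nth set0) big_mkord.
rewrite big_uniq ?refinement_uniq // -[RHS](bdcoef_bdcoef F x y) [RHS](bigID (mem s)) /=.
rewrite [X in _ = _ + X]big1 ?addr0 // => z zs; apply: bdcoef_mul_eq0.
apply: contra zs => /andP[xz zy]; rewrite mem_refinement.
by apply: (DEL_sub yD (facet_sub zy)); rewrite -card_gt0 (facet_card xz).
Qed.

Lemma bdrow_cycle (c : 'cV[F]_(size s)) :
  \sum_(q < size s | #|simplex q| == k.+1)
    (filt_bd F s *m c) q 0 *: bdrow F (simplex q) = 0.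
Proof.
apply/rowP => a; rewrite summxE mxE.
under eq_bigr => q _ do rewrite !mxE mulr_suml.
rewrite exchange_big /= big1 // => l _.
have l_DEL : simplex l \in DEL P by rewrite -mem_refinement mem_nth.
rewrite -[RHS](mulr0 (c l 0)).
rewrite -[X in _ = _ * X](bdcoef_bdcoef_refinement (nth set0 (allsets n) a) l_DEL).
by rewrite mulr_sumr; apply: eq_bigr => q _; rewrite mxE; ring.
Qed.

Lemma creator_boundary_span i j : persistence_pair F s i j -> #|simplex i| = k.+1 ->
  (bdrow F (simplex i) <=
     span_of (bdrow F) [set y in DELk P k | prec P k y (simplex i)])%MS.
Proof.
case=> i_s _; rewrite !rk_lowerleft => pair ci; set i' := Ordinal i_s.
have [c [_ v_i v_below]] := lowerleft_rank_gap (i := i') (pair_rank_gap pair).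
set v := filt_bd F s *m c in v_i v_below.
have /eqP := bdrow_cycle c; rewrite (bigD1 i') /= ?ci ?eqxx // addr_eq0 => /eqP cycle.
have -> : bdrow F (simplex i) = - (v i' 0)^-1 *:
    \sum_(q < size s | (#|simplex q| == k.+1) && (q != i')) v q 0 *: bdrow F (simplex q).
  by rewrite scaleNr -scalerN -cycle scalerA mulVf // scale1r.
apply/scalemx_sub/summx_sub => q /andP[cq qi].
case: (ltngtP q i) => [lt_qi|/v_below->|eq_qi]; last first.
- by rewrite -val_eqE /= eq_qi eqxx in qi.
- by rewrite scale0r sub0mx.
  apply/scalemx_sub/span_of_sub; rewrite in_set mem_DELk -mem_refinement mem_nth ?cq //=.
  have ne : simplex q != simplex i by rewrite nth_uniq ?refinement_uniq // neq_ltn lt_qi.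
  case/orP: (prec_totalk (eqP cq) ci ne) => // prec_iq.
  have := refinement_prec (mem_nth _ i_s) (mem_nth _ (ltn_ord q)) ci (eqP cq) prec_iq.
by rewrite !index_simplex // ltnNge ltnW.
Qed.

Lemma creator_notin_MSA i j S : persistence_pair F s i j -> #|simplex i| = k.+1 ->
  is_MSA P F k S -> simplex i \notin S.
Proof.
move=> pair ci [acS minS]; apply/negP => iS; have [i_s _ _] := pair.
have i_DEL : simplex i \in DEL P by rewrite -mem_refinement mem_nth.
have [y yT [yS rkS']] := span_of_exchange iS (spanning_acycle_free acS)
  (creator_boundary_span pair ci).
move: yT; rewrite in_set mem_DELk => /andP[/andP[yD /eqP cy] prec_yi].
have S'D : y |: S :\ simplex i \subset DELk P k.
  apply/subsetP => z; rewrite in_setU1 in_setD1 => /predU1P[->|/andP[_ zS]].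
    by rewrite mem_DELk yD cy eqxx.
  by case: acS => /subsetP SD _; apply: SD.
have cS' : #|y |: S :\ simplex i| = #|S| by rewrite cardsU1 yS (cardsD1 (simplex i) S) iS.
have acS' := spanning_acycle_exchange k_gt0 acS S'D cS' rkS'.
have w_incr : increasing_weight P k (fun x => (index x s)%:R : R).
  move=> a b; rewrite !mem_DELk => /andP[aD /eqP ca] /andP[bD /eqP cb] prec_ab.
  by rewrite ltr_nat refinement_prec ?mem_refinement.
have := minS _ w_incr _ acS'; rewrite (big_setD1 _ iS) (big_setU1 _ yS) /=.
by rewrite lerD2r ler_nat leqNgt refinement_prec ?mem_refinement.
Qed.

End Refinement.

Theorem lemma3 (R : realType) (F : fieldType) (d n : nat) (P : 'I_n -> 'rV[R]_d)
  (P_inj : injective P) (P_gp : general_position P)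
  (k : nat) (hk1 : (1 <= k)%N) (hkd : (k < d)%N)
  (s : seq {set 'I_n}) (hs : simplexwise_refinement P s)
  (i j : nat) (hpair : persistence_pair F s i j)
  (hdim : #|nth set0 s i| = k.+1)
  (hpos : diam P (nth set0 s i) < diam P (nth set0 s j)) :
  USC P k (nth set0 s i) /\
  (forall S : {set {set 'I_n}}, is_MSA P F k S -> nth set0 s i \notin S).
Proof.
split; first exact: (creator_USC (F := F) hk1 hs hpair hdim hpos).
by move=> S; apply: (creator_notin_MSA hk1 hs hpair hdim).
Qed.
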